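(* Let $X$ be a set, let $\mathcal C\subseteq\mathcal P(X)$ be a family of sets, and let $T:\mathcal C\to\mathcal C$ be an order reversing quasi involution on $\mathcal C$ which respects inclusions. Then there exists an order reversing quasi involution $\hat T:\mathcal P(X)\to\mathcal P(X)$ with $\hat T|_{\mathcal C}=T$.
   Context: $\mathcal P(X)$ is the power set of $X$. For $\mathcal C\subseteq\mathcal P(X)$, a map $T:\mathcal C\to\mathcal C$ is an order reversing quasi involution on $\mathcal C$ if for all $K,L\in\mathcal C$: (i) $K\subseteq TTK$, and (ii) $L\subseteq K$ implies $TK\subseteq TL$ (when $\mathcal C=\mathcal P(X)$ this is an order reversing quasi involution on $\mathcal P(X)$). $T:\mathcal C\to\mathcal C$ respects inclusions if for any $K\in\mathcal C$ and any family $(K_i)_{i\in I}\subseteq\mathcal C$ with $K\subseteq\bigcup_{i\in I}K_i$, one has $TK\supseteq\bigcap_{i\in I}TK_i$. *)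

Set Implicit Arguments.

Definition subset {X : Type} (A B : X -> Prop) : Prop := forall x, A x -> B x.

Definition maps_into {X : Type} (C : (X -> Prop) -> Prop)
  (T : (X -> Prop) -> (X -> Prop)) : Prop := forall K, C K -> C (T K).

Definition orqi_on {X : Type} (C : (X -> Prop) -> Prop)
  (T : (X -> Prop) -> (X -> Prop)) : Prop :=
  maps_into C T /\
  (forall K, C K -> subset K (T (T K))) /\
  (forall K L, C K -> C L -> subset L K -> subset (T K) (T L)).

Definition orqi {X : Type} (T : (X -> Prop) -> (X -> Prop)) : Prop :=
  (forall K, subset K (T (T K))) /\
  (forall K L, subset L K -> subset (T K) (T L)).

Definition respects_inclusions {X : Type} (C : (X -> Prop) -> Prop)
  (T : (X -> Prop) -> (X -> Prop)) : Prop :=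
  forall (I : Type) (K : X -> Prop) (Ks : I -> X -> Prop),
    C K -> (forall i, C (Ks i)) ->
    subset K (fun x => exists i, Ks i x) ->
    subset (fun x => forall i, T (Ks i) x) (T K).


Set Implicit Arguments.

(* The extension is the polarity of a symmetric relation: call x and y
   related when y lies in some L of C with x in T L.  Symmetry follows from
   L <= TTL, and the polar A |-> {x | x is related to every y in A} of any
   symmetric relation is an order reversing quasi involution.  On K in C the
   polar contains T K trivially; conversely, if x is in the polar of K, the
   sets L of C with x in T L cover K, so respecting inclusions puts x in
   T K. *)

Section Polarity.

Variables (X : Type) (R : X -> X -> Prop).

Definition polar (A : X -> Prop) : X -> Prop := fun x => forall y, A y -> R x y.

Lemma polar_antitone (K L : X -> Prop) :
  subset L K -> subset (polar K) (polar L).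
Proof. intros HLK x Hx y Hy. apply Hx, HLK, Hy. Qed.

Hypothesis R_sym : forall x y, R x y -> R y x.

Lemma subset_polar_polar (K : X -> Prop) : subset K (polar (polar K)).
Proof. intros y Hy x Hx. apply R_sym, Hx, Hy. Qed.

Lemma polar_orqi : orqi polar.
Proof. split; [exact subset_polar_polar | exact polar_antitone]. Qed.

End Polarity.

Section RelationOfT.

Variables (X : Type) (C : (X -> Prop) -> Prop) (T : (X -> Prop) -> X -> Prop).

Definition rel_of (x y : X) : Prop := exists L, C L /\ L y /\ T L x.

Lemma rel_of_sym :
  maps_into C T -> (forall K, C K -> subset K (T (T K))) ->
  forall x y, rel_of x y -> rel_of y x.
Proof.
  intros Hmap Hinv x y [L [HL [Hy Hx]]].
  exists (T L). repeat split.
  - apply Hmap, HL.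
  - exact Hx.
  - apply Hinv; assumption.
Qed.

Lemma subset_T_polar (K : X -> Prop) : C K -> subset (T K) (polar rel_of K).
Proof. intros HK x Hx y Hy. exists K. auto. Qed.

Lemma subset_polar_T (K : X -> Prop) :
  respects_inclusions C T -> C K -> subset (polar rel_of K) (T K).
Proof.
  intros Hresp HK x Hx.
  pose (I := {L : X -> Prop | C L /\ T L x}).
  apply (Hresp I K (fun i => proj1_sig i) HK).
  - intros i. exact (proj1 (proj2_sig i)).
  - intros y Hy. destruct (Hx y Hy) as [L [HL [HLy HLx]]].
    exists (exist _ L (conj HL HLx)). exact HLy.
  - intros i. exact (proj2 (proj2_sig i)).
Qed.

End RelationOfT.

Theorem theorem1p6 (X : Type) (C : (X -> Prop) -> Prop)
  (T : (X -> Prop) -> (X -> Prop)) :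
  orqi_on C T -> respects_inclusions C T ->
  exists That : (X -> Prop) -> (X -> Prop),
    orqi That /\ (forall K, C K -> forall x, That K x <-> T K x).
Proof.
  intros [Hmap [Hinv _]] Hresp.
  exists (polar (rel_of C T)). split.
  - apply polar_orqi, rel_of_sym; assumption.
  - intros K HK x. split.
    + apply subset_polar_T; assumption.
    + apply subset_T_polar; assumption.
Qed.
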